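(* Let $K=[s,t]$ with $0<s<t<\xi$. There are constants $C=C(K)>0$ and $D\ge0$ such that for every $\sigma\in\mathcal A^*$ with $\pi(\sigma)\in K$, $$\|M(\sigma)\|_1\le C|\sigma|^D\eta(\sigma),$$ where $\|\cdot\|_1$ is the operator norm induced by the $\ell^1$ norm.
   Context: Fix integers $d\ge 3$ and $m\ge d$ and a probability vector $\mathbf p=(p_0,\dots,p_m)$ with all $p_i>0$ which is regular, normalized so that $p_0\le p_m\le p_i$ for all $1\le i\le m-1$. Let $\mathcal A=\{0,\dots,m\}$, $\mathcal A^k$ the set of words of length $k$, $\mathcal A^*=\bigcup_{k\ge0}\mathcal A^k$, $|\sigma|$ the length of $\sigma$. Put $\xi=m/(d-1)$. Define $\pi(\sigma)=\sum_{i=1}^{|\sigma|}\sigma_i d^{-i}$. For $\sigma\in\mathcal A^k$ let $\mathbf p(\sigma)=\prod_{j=1}^k p_{\sigma_j}$ and $\eta(\sigma)=\sum\{\mathbf p(\sigma'):\sigma'\in\mathcal A^k,\ \pi(\sigma')=\pi(\sigma)\}$. Let $a=1+\lfloor (m-d)/(d-1)\rfloor$, set $p_j=0$ for $j\notin\mathcal A$, and let $M_i$ ($i\in\mathcal A$) be the $(2a+1)\times(2a+1)$ matrix indexed by $\{-a,\dots,a\}^2$ with $M_i(k,l)=p_{k+i-ld}$; $M(\sigma)=M_{\sigma_k}\cdots M_{\sigma_1}$ for $\sigma\in\mathcal A^k$. *)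

From HB Require Import structures.
From mathcomp Require Import all_boot all_order all_algebra.
From mathcomp Require Import all_classical all_reals exp.
Set Implicit Arguments. Unset Strict Implicit. Unset Printing Implicit Defensive.
Import Order.TTheory GRing.Theory Num.Theory.
Local Open Scope ring_scope.

Section Defs.
Variable R : realType.
Variables (d m : nat).
Notation A := 'I_m.+1.
Variable p : A -> R.

Definition piw (s : seq A) : R :=
  \sum_(i < size s) (nth ord0 s i)%:R / (d%:R ^+ i.+1).

Definition pw (s : seq A) : R := \prod_(x <- s) p x.

Definition etaw (s : seq A) : R :=
  \sum_(t : (size s).-tuple A | piw t == piw s) pw t.

Definition aa : nat := (1 + (m - d) %/ (d - 1))%N.

Definition pz (j : int) : R :=
  match j with
  | Posz n => if (n <= m)%N then p (inord n) else 0
  | Negz _ => 0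
  end.

(* matrices indexed by {-a,...,a}; index r : 'I_(2a+1) stands for r - a *)
Definition idx (r : 'I_(aa.*2.+1)) : int := (r%:Z - aa%:Z)%R.

Definition Mi (i : A) : 'M[R]_(aa.*2.+1) :=
  \matrix_(k, l) pz (idx k + (i : nat)%:Z - idx l * d%:Z).

(* M(sigma) = M_{sigma_k} ... M_{sigma_1} *)
Definition Mw (s : seq A) : 'M[R]_(aa.*2.+1) :=
  foldl (fun acc i => Mi i *m acc) 1%:M s.

End Defs.

Definition norm1 (R : realType) n (x : 'cV[R]_n) : R := \sum_i `|x i 0|.
Definition opnorm1 (R : realType) n (B : 'M[R]_n) : R :=
  sup [set norm1 (B *m x) | x in [set x : 'cV[R]_n | norm1 x <= 1]]%classic.

From HB Require Import structures.
From mathcomp Require Import all_boot all_order all_algebra.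
From mathcomp Require Import all_classical all_reals exp.
From mathcomp Require Import zify ring lra.
Set Implicit Arguments. Unset Strict Implicit. Unset Printing Implicit Defensive.
Import Order.TTheory GRing.Theory Num.Theory.
Local Open Scope ring_scope.

(* The entries of M(sigma) lie in [0, 1], and M(sigma)(0, 0) <= eta(sigma):
   expanding the matrix product, M(sigma)(0, 0) sums p(sigma') over some of the words sigma'
   with the same integer value as sigma.  With S = sum_i 1/p_i >= max p_i/p_j, moving the row
   index of column 0 one step toward 0 costs at most a factor S |sigma| + 1, by induction on
   sigma using p_0 <= p_(d-1) (and p_m <= p_(m+1-d) through the symmetry i |-> m - i); so
   column 0 is bounded by (S |sigma| + 1)^a M(sigma)(0, 0).  Finally, since pi(sigma) stays
   away from 0 and xi, the prefix of sigma of some fixed length r has an integer value deep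
   inside its range, so column 0 of M(prefix) is bounded below by S^-r; this lets column 0
   of M(sigma) dominate every column up to the factor S^r. *)

Lemma opnorm1_le_sum_norm (R : realType) n (B : 'M[R]_n) :
  opnorm1 B <= \sum_i \sum_j `|B i j|.
Proof.
rewrite /opnorm1; apply: ge_sup.
  exists (norm1 (B *m 0)), 0 => //.
  by rewrite /= /norm1 big1 // => i _; rewrite mxE normr0.
move=> _ [x x_le1 <-]; rewrite /norm1; apply: ler_sum => i _.
rewrite mxE; apply: le_trans (ler_norm_sum _ _ _) _.
apply: ler_sum => j _; rewrite normrM -[leRHS]mulr1; apply: ler_wpM2l => //.
apply: le_trans x_le1.
by rewrite /norm1 (bigD1 j) //= lerDl sumr_ge0.
Qed.

Lemma ler_sum_term (R : numDomainType) (T : finType) (F : T -> R) j :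
  (forall i, 0 <= F i) -> F j <= \sum_i F i.
Proof. by move=> F_ge0; rewrite (bigD1 j) //= lerDl sumr_ge0. Qed.

Lemma sum_indicator_le1 (R : numDomainType) (T : finType) (P : pred T) :
  (forall i j, P i -> P j -> i = j) -> \sum_i (P i)%:R <= (1 : R).
Proof.
move=> P_uniq; case: (pickP P) => [j0 Pj0|P0]; last first.
  by rewrite big1 // => i _; rewrite P0.
rewrite (bigD1 j0) //= Pj0 big1 ?addr0 // => i neq_ij0.
by case: (boolP (P i)) => // Pi; rewrite (P_uniq _ _ Pi Pj0) eqxx in neq_ij0.
Qed.

Section Matrices.
Variables (R : realType) (d m : nat) (p : 'I_m.+1 -> R).
Local Notation N := (aa d m).*2.+1.
Local Notation idx := (@idx d m).
Local Notation M := (Mw d p).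

Lemma idx_inj : injective idx.
Proof. by move=> i j /addIr /eqP; rewrite eqz_nat => /eqP /val_inj. Qed.

Lemma idx_bounds (k : 'I_N) : - (aa d m)%:Z <= idx k <= (aa d m)%:Z.
Proof. by have := ltn_ord k; rewrite /idx; lia. Qed.

Lemma idx_onto (e : int) : - (aa d m)%:Z <= e <= (aa d m)%:Z ->
  exists k : 'I_N, idx k = e.
Proof.
move=> e_bounds; have lt_eN : (absz (e + (aa d m)%:Z)%R < N)%N by lia.
by exists (Ordinal lt_eN); rewrite /idx /=; lia.
Qed.

Definition center : 'I_N := inord (aa d m).

Lemma idx_center : idx center = 0.
Proof. by rewrite /idx /center inordK ?subrr //; lia. Qed.

Lemma pz_out c : (c < 0) || (m%:Z < c) -> pz p c = 0.
Proof. by case: c => [n|n] //= c_out; case: ifP => //; lia. Qed.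

Lemma pz_in c : 0 <= c <= m%:Z -> pz p c = p (inord (absz c)).
Proof. by case: c => [n|n] //= c_in; case: ifP => //; lia. Qed.

Lemma pz_indicator c : pz p c = \sum_(y : 'I_m.+1) (c == (y : nat)%:Z)%:R * p y.
Proof.
have [c_in|c_out] := boolP (0 <= c <= m%:Z); last first.
  rewrite pz_out; last by lia.
  by rewrite big1 // => y _; case: eqP => [c_y|]; [have := ltn_ord y; lia|rewrite mul0r].
rewrite pz_in // (bigD1 (inord (absz c))) //= inordK; last by lia.
rewrite (_ : c == _) ?mul1r; last by lia.
rewrite big1 ?addr0 // => y y_neq; case: eqP => [c_y|]; last by rewrite mul0r.
by case/eqP: y_neq; apply: val_inj; rewrite /= inordK; lia.
Qed.

Lemma MiE i k l : Mi d p i k l = pz p (idx k + (i : nat)%:Z - idx l * d%:Z).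
Proof. by rewrite mxE. Qed.

Lemma Mw_nilE k l : M [::] k l = (k == l)%:R.
Proof. by rewrite /Mw /= mxE. Qed.

Lemma Mw_rcons s i : M (rcons s i) = Mi d p i *m M s.
Proof. by rewrite /Mw foldl_rcons. Qed.

Lemma Mw_cat s1 s2 : M (s1 ++ s2) = M s2 *m M s1.
Proof.
elim/last_ind: s2 => [|s2 x IH]; first by rewrite cats0 /Mw /= mul1mx.
by rewrite -rcons_cat !Mw_rcons IH mulmxA.
Qed.

Lemma Mw_cons x s : M (x :: s) = M s *m Mi d p x.
Proof. by rewrite -cat1s Mw_cat /Mw /= mulmx1. Qed.

Hypothesis p_ge0 : forall i, 0 <= p i.

Lemma pz_ge0 c : 0 <= pz p c.
Proof. by case: c => [n|n] //=; case: ifP. Qed.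

Lemma Mi_ge0 i k l : 0 <= Mi d p i k l.
Proof. by rewrite MiE pz_ge0. Qed.

Lemma Mw_ge0 s k l : 0 <= M s k l.
Proof.
elim/last_ind: s k l => [|s x IH] k l; first by rewrite Mw_nilE ler0n.
by rewrite Mw_rcons mxE sumr_ge0 // => j _; rewrite mulr_ge0 ?Mi_ge0.
Qed.

Hypothesis sum_p_le1 : \sum_i p i <= 1.

(* Distinct indices j pick distinct letters [idx j + c]. *)
Lemma sum_pz_shift_le1 (c : int) : \sum_(j : 'I_N) pz p (idx j + c) <= 1.
Proof.
under eq_bigr => j _ do rewrite pz_indicator.
rewrite exchange_big /=; apply: le_trans sum_p_le1; apply: ler_sum => y _.
rewrite -mulr_suml -[leRHS]mul1r ler_wpM2r //.
apply: sum_indicator_le1 => i j /eqP idx_i /eqP idx_j.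
by apply: idx_inj; apply: (addIr c); rewrite idx_i idx_j.
Qed.

Lemma Mw_le1 s k l : M s k l <= 1.
Proof.
elim: s k l => [|x s IH] k l; first by rewrite Mw_nilE; case: eqP.
rewrite Mw_cons mxE; apply: le_trans (sum_pz_shift_le1 ((x : nat)%:Z - idx l * d%:Z)).
apply: ler_sum => j _; rewrite MiE -[leRHS]mul1r addrA.
by apply: ler_wpM2r; [exact: pz_ge0|exact: IH].
Qed.

End Matrices.

Section StepTowardCenter.
Variables (R : realType) (d m : nat) (p : 'I_m.+1 -> R).
Local Notation N := (aa d m).*2.+1.
Local Notation idx := (@idx d m).
Local Notation M := (Mw d p).
Local Notation c0 := (center d m).
Hypotheses (d_gt0 : (0 < d)%N) (p_ge0 : forall i, 0 <= p i).
Variable rho : R.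
Hypotheses (rho_ge0 : 0 <= rho) (p_ratio : forall i j, p i <= rho * p j).
Hypothesis pz0_le : pz p 0 <= pz p (d%:Z - 1).

Lemma pz_ratio c c' : 0 <= c <= m%:Z -> 0 <= c' <= m%:Z -> pz p c <= rho * pz p c'.
Proof. by move=> c_in c'_in; rewrite !pz_in. Qed.

(* The j-th term of M(s x)(k, 0) is at most rho times the j-th term of M(s x)(k - 1, 0),
   except when it uses the letter 0: then the induction hypothesis trades j for j - 1,
   and the letter d - 1 (with p_0 <= p_(d-1)) gives a term of M(s x)(k - 1, 0). *)
Lemma Mw_rcons_term_le s x (k k1 j : 'I_N) :
  (forall k k1, idx k1 = idx k - 1 -> 0 < idx k -> M s k c0 <= rho * (size s)%:R * M s k1 c0) ->
  idx k1 = idx k - 1 -> 0 < idx k ->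
  Mi d p x k j * M s j c0 <= rho * (Mi d p x k1 j * M s j c0)
    + rho * (size s)%:R * M (rcons s x) k1 c0 * (idx k + (x : nat)%:Z - idx j * d%:Z == 0)%:R.
Proof.
move=> IH idx_k1 idx_k_gt0; rewrite !MiE; set c := idx k + _ - _.
have -> : idx k1 + (x : nat)%:Z - idx j * d%:Z = c - 1 by rewrite /c idx_k1; lia.
have [c_eq0|c_neq0] := eqVneq c 0; last first.
  rewrite mulr0 addr0; have [c_in|c_out] := boolP (0 < c <= m%:Z).
    by rewrite mulrA ler_wpM2r ?Mw_ge0 // pz_ratio //; lia.
  by rewrite pz_out ?mul0r ?mulr_ge0 ?pz_ge0 ?Mw_ge0 //; lia.
rewrite mulr1 c_eq0 (@pz_out _ _ p (-1)) // mul0r mulr0 add0r.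
have idx_j_gt0 : 0 < idx j.
  have: idx j * d%:Z = idx k + (x : nat)%:Z by move: c_eq0; rewrite /c; lia.
  by have := ltn_ord x; nia.
have [j1 idx_j1] : exists j1, idx j1 = idx j - 1.
  by apply: idx_onto; have := idx_bounds j; lia.
have last_term_le : pz p (d%:Z - 1) * M s j1 c0 <= M (rcons s x) k1 c0.
  rewrite Mw_rcons mxE; apply: le_trans _ (ler_sum_term j1 _) => [|i]; last first.
    by rewrite mulr_ge0 ?Mi_ge0 ?Mw_ge0.
  by rewrite MiE idx_j1 idx_k1 (_ : _ - _ = d%:Z - 1) //; move: c_eq0; rewrite /c; lia.
apply: le_trans (ler_wpM2l (pz_ge0 _ _) (IH j j1 idx_j1 idx_j_gt0)) _ => //.
rewrite mulrCA ler_wpM2l ?mulr_ge0 //; apply: le_trans last_term_le.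
by rewrite ler_wpM2r ?Mw_ge0.
Qed.

Lemma Mw_step_down s (k k1 : 'I_N) : idx k1 = idx k - 1 -> 0 < idx k ->
  M s k c0 <= rho * (size s)%:R * M s k1 c0.
Proof.
elim/last_ind: s k k1 => [|s x IH] k k1 idx_k1 idx_k_gt0.
  rewrite Mw_nilE mulr0 mul0r; case: eqP => // k_c0.
  by move: idx_k_gt0; rewrite k_c0 idx_center.
have term_le := fun j => Mw_rcons_term_le x j IH idx_k1 idx_k_gt0.
set X := M (rcons s x) k1 c0; rewrite size_rcons Mw_rcons mxE.
apply: le_trans (ler_sum _ (fun j _ => term_le j)) _.
rewrite big_split /= -!mulr_sumr; set S := \sum_j (_ == _)%:R.
rewrite (_ : \sum_j _ = X); last by rewrite /X Mw_rcons mxE.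
have S_le1 : S <= 1.
  apply: sum_indicator_le1 => i j /eqP idx_i /eqP idx_j; apply: idx_inj.
  by apply: (@mulIf _ d%:Z); [apply/eqP; lia|lia].
have X_ge0 : 0 <= X by exact: Mw_ge0.
rewrite -natr1 mulrDr mulr1 mulrDl addrC lerD2r.
by rewrite ler_piMr // !mulr_ge0.
Qed.

End StepTowardCenter.

Section Reflection.
Variables (R : realType) (d m : nat) (p : 'I_m.+1 -> R).
Local Notation N := (aa d m).*2.+1.
Local Notation idx := (@idx d m).
Local Notation prev := (p \o @rev_ord m.+1).

Lemma idx_rev (k : 'I_N) : idx (rev_ord k) = - idx k.
Proof. by have := ltn_ord k; rewrite /idx /=; move: (nat_of_ord k) => n; rewrite -addnn; lia. Qed.

Lemma center_rev : rev_ord (center d m) = center d m.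
Proof. by apply: idx_inj; rewrite idx_rev idx_center oppr0. Qed.

Lemma pz_rev c : pz prev c = pz p (m%:Z - c).
Proof.
have [c_in|c_out] := boolP (0 <= c <= m%:Z); last by rewrite !pz_out //; lia.
rewrite !pz_in /=; [congr p; apply: val_inj; rewrite /= !inordK|..]; lia.
Qed.

Lemma Mi_rev i k l :
  Mi d prev (rev_ord i) (rev_ord k) (rev_ord l) = Mi d p i k l.
Proof. by rewrite !MiE pz_rev !idx_rev /=; congr pz; have := ltn_ord i; lia. Qed.

Lemma Mw_rev s k l :
  Mw d prev (map (@rev_ord _) s) (rev_ord k) (rev_ord l) = Mw d p s k l.
Proof.
elim/last_ind: s k l => [|s x IH] k l.
  by rewrite !Mw_nilE (inj_eq rev_ord_inj).
rewrite map_rcons !Mw_rcons !mxE (reindex_inj rev_ord_inj).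
by apply: eq_bigr => j _; rewrite Mi_rev IH.
Qed.

End Reflection.

Lemma Mw_step_up (R : realType) (d m : nat) (p : 'I_m.+1 -> R) (rho : R) :
  (0 < d)%N -> (forall i, 0 <= p i) -> 0 <= rho -> (forall i j, p i <= rho * p j) ->
  pz p m%:Z <= pz p (m%:Z + 1 - d%:Z) ->
  forall s (k k1 : 'I_(aa d m).*2.+1), idx k1 = idx k + 1 -> idx k < 0 ->
  Mw d p s k (center d m) <= rho * (size s)%:R * Mw d p s k1 (center d m).
Proof.
move=> d_gt0 p_ge0 rho_ge0 p_ratio pzm_le s k k1 idx_k1 idx_k_lt0.
rewrite -!(Mw_rev p) center_rev -(size_map (@rev_ord _)).
apply: Mw_step_down => //.
- by move=> i; exact: p_ge0.
- by move=> i j; exact: p_ratio.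
- by rewrite !pz_rev subr0 (_ : _ - (_ - 1) = m%:Z + 1 - d%:Z) //; lia.
- by rewrite !idx_rev idx_k1; lia.
- by rewrite idx_rev; lia.
Qed.

Lemma le_center_pow (R : realType) (d m : nat) (f : 'I_(aa d m).*2.+1 -> R) (K : R) :
  1 <= K -> 0 <= f (center d m) ->
  (forall k k1, idx k1 = idx k - 1 -> 0 < idx k -> f k <= K * f k1) ->
  (forall k k1, idx k1 = idx k + 1 -> idx k < 0 -> f k <= K * f k1) ->
  forall k, f k <= K ^+ aa d m * f (center d m).
Proof.
move=> K_ge1 f_c0_ge0 step_down step_up.
have K_ge0 : 0 <= K by apply: le_trans K_ge1.
suff by_dist e k : absz (idx k) = e -> f k <= K ^+ e * f (center d m).
  move=> k; apply: le_trans (by_dist _ k erefl) _.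
  by rewrite ler_wpM2r // ler_weXn2l //; have := idx_bounds k; lia.
elim: e k => [|e IH] k idx_k.
  by rewrite (_ : k = center d m) ?mul1r //; apply: idx_inj; rewrite idx_center; lia.
have [k1 idx_k1] : exists k1 : 'I_(aa d m).*2.+1, idx k1 = idx k - Num.sg (idx k).
  by apply: idx_onto; have := idx_bounds k; case: (ltgtP (idx k) 0) => h; lia.
rewrite exprS -mulrA; case: (ltgtP (idx k) 0) idx_k1 => [lt0|gt0|eq0] idx_k1.
- apply: le_trans (step_up _ k1 _ lt0) _; first by rewrite idx_k1 ltr0_sg.
  by rewrite ler_wpM2l // IH //; move: idx_k1; rewrite ltr0_sg //; lia.
- apply: le_trans (step_down _ k1 _ gt0) _; first by rewrite idx_k1 gtr0_sg.
  by rewrite ler_wpM2l // IH //; move: idx_k1; rewrite gtr0_sg //; lia.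
- by move: idx_k; rewrite eq0.
Qed.

Section WordValue.
Variables (d m : nat).

Fixpoint wval (w : seq 'I_m.+1) : nat :=
  if w is x :: w' then (x * d ^ size w' + wval w')%N else 0%N.

Definition wval_max (n : nat) : nat := (\sum_(i < n) m * d ^ i)%N.

Lemma wval_rcons w x : wval (rcons w x) = (d * wval w + x)%N.
Proof.
elim: w => [|y w IH] /=; first by rewrite muln0 add0n expn0 muln1 addn0.
by rewrite IH size_rcons expnS; ring.
Qed.

Lemma wval_max0 : wval_max 0 = 0%N.
Proof. by rewrite /wval_max big_ord0. Qed.

Lemma wval_maxS n : wval_max n.+1 = (d * wval_max n + m)%N.
Proof.
rewrite /wval_max big_ord_recl /= expn0 muln1 big_distrr /= addnC; congr (_ + _)%N.
by apply: eq_bigr => i _; rewrite /bump /= add1n expnS; ring.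
Qed.

Lemma wval_maxSr n : wval_max n.+1 = (m * d ^ n + wval_max n)%N.
Proof. by rewrite /wval_max big_ord_recr /= addnC. Qed.

Definition inner_word (w : seq 'I_m.+1) : bool :=
  (aa d m <= wval w)%N && (wval w + aa d m <= wval_max (size w))%N.

Lemma wval_le_max w : (wval w <= wval_max (size w))%N.
Proof.
elim: w => [|x w IH] /=; first by rewrite wval_max0.
by rewrite wval_maxSr leq_add // leq_mul // -ltnS.
Qed.

Hypotheses (d_gt1 : (1 < d)%N) (d_le_m : (d <= m)%N).

(* [aa] is the least a with a + m < (a + 1) d. *)
Lemma aa_window : (aa d m + m < (aa d m).+1 * d)%N.
Proof.
have d1_gt0 : (0 < d - 1)%N by lia.
have := divn_eq (m - d) (d - 1); have := ltn_pmod (m - d) d1_gt0.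
rewrite /aa; move: ((m - d) %/ (d - 1))%N ((m - d) %% (d - 1))%N => q r.
nia.
Qed.

Lemma split_last_digit (u M : nat) : (u <= d * M + m)%N ->
  exists W tau, [/\ (W <= M)%N, (tau <= m)%N & u = d * W + tau]%N.
Proof.
move=> u_le; have d_gt0 : (0 < d)%N by lia.
have [q_le|q_gt] := leqP (u %/ d)%N M.
  exists (u %/ d)%N, (u %% d)%N; split => //; last by rewrite mulnC -divn_eq.
  by have := ltn_pmod u d_gt0; lia.
exists M, (u - d * M)%N; split => //; first by lia.
by have := leq_mul (leqnn d) q_gt; have := leq_divM u d; lia.
Qed.

End WordValue.

Section PiValue.
Variables (R : realType) (d m : nat).
Hypothesis d_gt0 : (0 < d)%N.

Lemma piw_cons (x : 'I_m.+1) (w : seq 'I_m.+1) :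
  piw R d (x :: w) = ((x : nat)%:R + piw R d w) / d%:R.
Proof.
rewrite /piw big_ord_recl /= expr1 mulrDl mulr_suml; congr (_ + _).
by apply: eq_bigr => i _; rewrite /bump /= add1n exprSr invfM mulrA.
Qed.

Lemma dX_neq0 n : d%:R ^+ n != 0 :> R.
Proof. by rewrite expf_eq0 pnatr_eq0 andbC; case: d d_gt0. Qed.

Lemma piw_wval (w : seq 'I_m.+1) : piw R d w = (wval d w)%:R / d%:R ^+ size w.
Proof.
apply: (canRL (mulfK (dX_neq0 _))).
elim: w => [|x w IH]; first by rewrite /piw big_ord0 mul0r.
have d_neq0 := dX_neq0 1; rewrite expr1 in d_neq0.
by rewrite piw_cons /= exprS mulrA divfK // mulrDl IH natrD natrM natrX.
Qed.

Lemma piw_cat (w1 w2 : seq 'I_m.+1) :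
  piw R d (w1 ++ w2) = piw R d w1 + piw R d w2 / d%:R ^+ size w1.
Proof.
elim: w1 => [|x w1 IH] /=; first by rewrite /piw big_ord0 add0r expr0 divr1.
have := dX_neq0 1; have := dX_neq0 (size w1); rewrite expr1 => dX_neq0 d_neq0.
by rewrite !piw_cons IH exprS; field; rewrite dX_neq0 d_neq0.
Qed.

Lemma wval_max_geom n : (d%:R - 1) * (wval_max d m n)%:R = m%:R * (d%:R ^+ n - 1) :> R.
Proof.
elim: n => [|n IH]; first by rewrite wval_max0 expr0 subrr !mulr0.
by rewrite wval_maxSr natrD natrM natrX mulrDr IH exprS; ring.
Qed.

Lemma piw_ge0 (w : seq 'I_m.+1) : 0 <= piw R d w.
Proof. by rewrite piw_wval divr_ge0 // exprn_ge0. Qed.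

End PiValue.

Lemma piw_le (R : realType) (d m : nat) (w : seq 'I_m.+1) :
  (1 < d)%N -> piw R d w <= m%:R / (d%:R - 1).
Proof.
move=> d_gt1; have d_gt0 := ltnW d_gt1.
have d1_gt0 : 0 < d%:R - 1 :> R by rewrite subr_gt0 ltr1n.
have dX_gt0 : 0 < d%:R ^+ size w :> R by rewrite exprn_gt0 // ltr0n; lia.
rewrite (piw_wval R d_gt0) ler_pdivrMr // mulrAC ler_pdivlMr //.
apply: le_trans (_ : (d%:R - 1) * (wval_max d m (size w))%:R <= _).
  by rewrite mulrC ler_pM2l // ler_nat wval_le_max.
by rewrite wval_max_geom ler_wpM2l // lerBlDr lerDl.
Qed.

Section ColumnLowerBound.
Variables (R : realType) (d m : nat) (p : 'I_m.+1 -> R).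
Local Notation N := (aa d m).*2.+1.
Local Notation idx := (@idx d m).
Local Notation M := (Mw d p).
Local Notation c0 := (center d m).
Hypotheses (d_gt1 : (1 < d)%N) (d_le_m : (d <= m)%N) (p_ge0 : forall i, 0 <= p i).
Variable pmin : R.
Hypotheses (pmin_ge0 : 0 <= pmin) (pmin_le : forall i, pmin <= p i).

(* Row j of M(w x) = M_x M(w) picks up row k of M(w) through a single letter, where
   wval(w) + idx k is the quotient of d wval(w) + x + idx j by d, capped at wval_max |w|. *)
Lemma Mw_center_col_ge (w : seq 'I_m.+1) (j : 'I_N) :
  0 <= (wval d w)%:Z + idx j <= (wval_max d m (size w))%:Z ->
  pmin ^+ size w <= M w j c0.
Proof.
elim/last_ind: w j => [|w x IH] j j_in.
  rewrite (_ : j = c0) ?Mw_nilE ?eqxx //.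
  by apply: idx_inj; rewrite idx_center; move: j_in; rewrite /= wval_max0; lia.
rewrite wval_rcons size_rcons wval_maxS in j_in.
set u := absz ((d * wval d w + x)%N%:Z + idx j).
have u_le : (u <= d * wval_max d m (size w) + m)%N by rewrite /u; lia.
have [W [tau [W_le tau_le u_eq]]] := split_last_digit d_gt1 d_le_m u_le.
have [k idx_k] : exists k : 'I_N, idx k = W%:Z - (wval d w)%:Z.
  apply: idx_onto; have := aa_window d_gt1 d_le_m; have := ltn_ord x.
  have := idx_bounds j; have := wval_le_max d w; move: u_eq; rewrite /u; nia.
rewrite Mw_rcons mxE; apply: le_trans _ (ler_sum_term k _) => [|i]; last first.
  by rewrite mulr_ge0 ?Mi_ge0 ?Mw_ge0.
rewrite MiE (_ : _ - _ = tau%:Z); last by rewrite idx_k; move: u_eq; rewrite /u; lia.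
by rewrite size_rcons exprS ler_pM ?exprn_ge0 // ?pz_in ?IH ?idx_k //; lia.
Qed.

End ColumnLowerBound.

Lemma sum_tuple_cons (R : nmodType) (T : finType) n (F : n.+1.-tuple T -> R) :
  \sum_(t : n.+1.-tuple T) F t = \sum_(x : T) \sum_(t : n.-tuple T) F [tuple of x :: t].
Proof.
rewrite (partition_big (@thead _ _) xpredT) //=; apply: eq_bigr => x _.
rewrite (reindex (fun t : n.-tuple T => [tuple of x :: t])) /=; last first.
  exists (fun t : n.+1.-tuple T => [tuple of behead t]) => [t _|t /eqP <-].
    exact: val_inj.
  by rewrite -tuple_eta.
by apply: eq_bigl => t; rewrite theadE eqxx.
Qed.

Lemma pw_cons (R : realType) m (p : 'I_m.+1 -> R) x w : pw p (x :: w) = p x * pw p w.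
Proof. by rewrite /pw big_cons. Qed.

Lemma pw_ge0 (R : realType) m (p : 'I_m.+1 -> R) w :
  (forall i, 0 <= p i) -> 0 <= pw p w.
Proof. by move=> p_ge0; rewrite /pw prodr_ge0. Qed.

Section PathCounting.
Variables (R : realType) (d m : nat) (p : 'I_m.+1 -> R).
Local Notation N := (aa d m).*2.+1.
Local Notation idx := (@idx d m).
Local Notation M := (Mw d p).
Hypotheses (d_gt0 : (0 < d)%N) (p_ge0 : forall i, 0 <= p i).

Definition path_ind (s t : seq 'I_m.+1) (k l : 'I_N) : R :=
  ((wval d t)%:Z + idx l * (d ^ size s)%:Z == (wval d s)%:Z + idx k)%:R.

Lemma path_ind_cons (x y : 'I_m.+1) s (t : seq 'I_m.+1) (k l j : 'I_N) :
  size t = size s ->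
  path_ind s t k j * (idx j + (x : nat)%:Z - idx l * d%:Z == (y : nat)%:Z)%:R
  <= path_ind (x :: s) (y :: t) k l * (idx j + (x : nat)%:Z - idx l * d%:Z == (y : nat)%:Z)%:R.
Proof.
move=> size_t; rewrite /path_ind /= size_t expnS.
case: (idx j + _ - _ =P _) => [j_y|_]; last by rewrite /= !mulr0.
case: eqP => [shift_j|_]; last by rewrite /= mul0r mulr1 ler0n.
case: eqP => [//|neq_kl]; exfalso; apply: neq_kl.
by move: shift_j; rewrite !PoszD !PoszM -j_y; lia.
Qed.

(* An inequality only: the paths of t through carries outside [-aa, aa] are missing. *)
Lemma Mw_le_paths s k l :
  M s k l <= \sum_(t : (size s).-tuple 'I_m.+1) pw p t * path_ind s t k l.
Proof.
elim: s k l => [|x s IH] k l.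
  rewrite Mw_nilE (big_pred1 [tuple]) => [|t]; last by symmetry; apply/eqP; exact: tuple0.
  rewrite /path_ind /pw big_nil mul1r /= expn0; case: eqP => [->|_]; last exact: ler0n.
  by case: eqP => // neq_l; exfalso; apply: neq_l; lia.
rewrite Mw_cons mxE sum_tuple_cons /=.
apply: le_trans (ler_sum _ (fun j _ => ler_wpM2r (Mi_ge0 p_ge0 _ _ _) (IH k j))) _.
under [leLHS]eq_bigr => j _ do rewrite MiE pz_indicator mulr_sumr.
rewrite exchange_big /=; apply: ler_sum => y _.
under eq_bigr => j _ do rewrite mulr_suml.
rewrite exchange_big /=; apply: ler_sum => t _.
set step := fun j : 'I_N => (idx j + (x : nat)%:Z - idx l * d%:Z == (y : nat)%:Z)%:R : R.
rewrite (eq_bigr (fun j => p y * pw p t * (path_ind s t k j * step j))); last first.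
  by move=> j _; rewrite /step; ring.
rewrite -mulr_sumr pw_cons ler_wpM2l ?mulr_ge0 ?pw_ge0 //.
apply: le_trans (ler_sum _ (fun j _ => path_ind_cons x y k l j (size_tuple t))) _.
rewrite -mulr_sumr ler_piMr ?ler0n //.
apply: sum_indicator_le1 => i j /eqP idx_i /eqP idx_j; apply: idx_inj; lia.
Qed.

Lemma Mw_center_le_eta s : M s (center d m) (center d m) <= etaw d p s.
Proof.
apply: le_trans (Mw_le_paths s _ _) _.
rewrite /etaw [leRHS]big_mkcond /=; apply: ler_sum => t _.
rewrite /path_ind idx_center mul0r !addr0.
case: eqP => [eq_val|_]; last by rewrite mulr0; case: ifP => _; rewrite ?pw_ge0.
rewrite (_ : piw R d t == piw R d s) ?mulr1 //.
by rewrite !piw_wval // size_tuple; case: eq_val => ->.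
Qed.

End PathCounting.

Section Window.
Variables (R : realType) (d m : nat).
Hypothesis d_gt1 : (1 < d)%N.
Local Notation xi := (m%:R / (d%:R - 1) : R).

Lemma exists_pow_ge (C c : R) : 0 < c -> exists r, C <= d%:R ^+ r * c.
Proof.
move=> c_gt0; have [C_le0|C_gt0] := lerP C 0.
  by exists 0%N; rewrite expr0 mul1r (le_trans C_le0) ?ltW.
have Cc_ge0 : 0 <= C / c by rewrite divr_ge0 ?ltW.
exists (Num.Def.archi_bound (C / c)); rewrite -ler_pdivrMr //.
apply: ltW; apply: lt_le_trans (archi_boundP Cc_ge0) _.
by rewrite -natrX ler_nat ltnW // ltn_expl.
Qed.

Lemma prefix_in_window (s t : R) r (sigma : seq 'I_m.+1) :
  xi + (aa d m)%:R <= d%:R ^+ r * s -> xi + (aa d m)%:R <= d%:R ^+ r * (xi - t) ->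
  s <= piw R d sigma <= t -> (r <= size sigma)%N -> inner_word d (take r sigma).
Proof.
move=> s_deep t_deep /andP[s_le t_ge] r_le.
have d_gt0 : (0 < d)%N by lia.
have size_take : size (take r sigma) = r by rewrite size_takel.
have dr_gt0 : 0 < d%:R ^+ r :> R by rewrite exprn_gt0 // ltr0n.
have := piw_cat R d_gt0 (take r sigma) (drop r sigma).
rewrite cat_take_drop size_take [piw R d (take r sigma)]piw_wval // size_take => pi_eq.
have val_eq : (wval d (take r sigma))%:R
    = d%:R ^+ r * piw R d sigma - piw R d (drop r sigma).
  by rewrite pi_eq; field; exact: lt0r_neq0.
have tail_ge0 := piw_ge0 R d_gt0 (drop r sigma).
have tail_le := piw_le R (drop r sigma) d_gt1.
have max_eq : (wval_max d m r)%:R = xi * (d%:R ^+ r - 1) :> R.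
  have d1_neq0 : d%:R - 1 != 0 :> R by rewrite subr_eq0 pnatr_eq1; lia.
  by apply: (mulfI d1_neq0); rewrite wval_max_geom; field.
apply/andP; split; rewrite ?size_take -(ler_nat R).
  by rewrite val_eq; have := ler_wpM2l (ltW dr_gt0) s_le; lra.
by rewrite natrD val_eq max_eq; have := ler_wpM2l (ltW dr_gt0) t_ge; nra.
Qed.

End Window.

Section Corollary.
Variables (R : realType) (d m : nat) (p : 'I_m.+1 -> R).
Local Notation N := (aa d m).*2.+1.
Local Notation idx := (@idx d m).
Local Notation M := (Mw d p).
Local Notation c0 := (center d m).
Hypotheses (d_gt1 : (1 < d)%N) (d_le_m : (d <= m)%N).
Hypotheses (p_gt0 : forall i, 0 < p i) (sum_p : \sum_i p i = 1).
Hypothesis p0_le_pm : p ord0 <= p ord_max.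
Hypothesis pm_le_p : forall i : 'I_m.+1, (0 < i)%N -> (i < m)%N -> p ord_max <= p i.

Local Notation S := (\sum_i (p i)^-1).

Let p_ge0 i : 0 <= p i. Proof. exact: ltW. Qed.
Let d_gt0 : (0 < d)%N. Proof. exact: ltnW. Qed.
Let sum_p_le1 : \sum_i p i <= 1. Proof. by rewrite sum_p. Qed.

Lemma p_le1 i : p i <= 1.
Proof. by rewrite -sum_p ler_sum_term. Qed.

Lemma invp_le_S i : (p i)^-1 <= S.
Proof. by rewrite ler_sum_term // => j; rewrite invr_ge0. Qed.

Lemma S_gt0 : 0 < S.
Proof. by apply: lt_le_trans (invp_le_S ord0); rewrite invr_gt0. Qed.

Lemma S_ge1 : 1 <= S.
Proof. by apply: le_trans (invp_le_S ord0); rewrite invf_ge1 ?p_le1 ?p_gt0. Qed.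

Lemma p_ratio i j : p i <= S * p j.
Proof.
apply: le_trans (p_le1 i) _.
by rewrite -ler_pdivrMr // div1r invp_le_S.
Qed.

Lemma invS_le_p i : S^-1 <= p i.
Proof. by rewrite invf_ple ?posrE ?S_gt0 ?p_gt0 ?invp_le_S. Qed.

Lemma pz_first_le : pz p 0 <= pz p (d%:Z - 1).
Proof.
rewrite !pz_in; [|lia|lia].
rewrite (_ : inord (absz 0) = ord0); last by apply: val_inj; rewrite /= inordK.
apply: le_trans p0_le_pm _; apply: pm_le_p; rewrite inordK; lia.
Qed.

Lemma pz_last_le : pz p m%:Z <= pz p (m%:Z + 1 - d%:Z).
Proof.
rewrite !pz_in; [|lia|lia].
rewrite (_ : inord (absz m) = ord_max); last by apply: val_inj; rewrite /= inordK.
by apply: pm_le_p; rewrite inordK; lia.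
Qed.

Lemma Mw_col_le_center s k :
  M s k c0 <= (S * (size s)%:R + 1) ^+ aa d m * M s c0 c0.
Proof.
have S_ge0 := ltW S_gt0.
have Sn_le : S * (size s)%:R <= S * (size s)%:R + 1 by rewrite lerDl.
apply: (le_center_pow (f := fun j => M s j c0)) => [||{}k k1 idx_k1 idx_k|{}k k1 idx_k1 idx_k].
- by rewrite lerDr mulr_ge0.
- exact: Mw_ge0.
- apply: le_trans (Mw_step_down d_gt0 p_ge0 S_ge0 p_ratio pz_first_le s idx_k1 idx_k) _.
  by rewrite ler_wpM2r ?Mw_ge0.
- apply: le_trans (Mw_step_up d_gt0 p_ge0 S_ge0 p_ratio pz_last_le s idx_k1 idx_k) _.
  by rewrite ler_wpM2r ?Mw_ge0.
Qed.

Lemma one_le_Spow_Mw w (j : 'I_N) :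
  0 <= (wval d w)%:Z + idx j <= (wval_max d m (size w))%:Z ->
  1 <= S ^+ size w * M w j c0.
Proof.
move=> j_in; have S_neq0 := lt0r_neq0 S_gt0.
have Sinv_ge0 : 0 <= S^-1 by rewrite invr_ge0 ltW ?S_gt0.
have low := Mw_center_col_ge d_gt1 d_le_m p_ge0 Sinv_ge0 invS_le_p j_in.
apply: le_trans (ler_wpM2l (exprn_ge0 _ (ltW S_gt0)) low).
by rewrite -exprMn mulfV // expr1n.
Qed.

Lemma Mw_le_pow_center sigma k l : M sigma k l <= S ^+ size sigma * M sigma c0 c0.
Proof.
apply: le_trans (Mw_le1 p_ge0 sum_p_le1 sigma k l) (one_le_Spow_Mw (j := c0) _).
by rewrite idx_center addr0; have := wval_le_max d sigma; lia.
Qed.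

Lemma Mw_cat_le_col w u k l : inner_word d w ->
  M (w ++ u) k l <= S ^+ size w * M (w ++ u) k c0.
Proof.
move=> /andP[lo hi]; rewrite Mw_cat !mxE mulr_sumr; apply: ler_sum => j _.
rewrite mulrCA ler_wpM2l ?Mw_ge0 //; apply: le_trans (Mw_le1 p_ge0 sum_p_le1 _ _ _) _.
by apply: one_le_Spow_Mw; have := idx_bounds j; lia.
Qed.

Lemma Mw_entry_le r sigma k l : ((r <= size sigma)%N -> inner_word d (take r sigma)) ->
  M sigma k l <= S ^+ r * ((S * (size sigma)%:R + 1) ^+ aa d m * M sigma c0 c0).
Proof.
move=> window; have S_ge0 := ltW S_gt0.
have K_ge1 : 1 <= (S * (size sigma)%:R + 1) ^+ aa d m.
  by rewrite exprn_ege1 // lerDr mulr_ge0.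
have [r_le|r_gt] := leqP r (size sigma).
  have := Mw_cat_le_col (drop r sigma) k l (window r_le).
  rewrite cat_take_drop size_takel // => /le_trans; apply.
  by rewrite ler_wpM2l ?exprn_ge0 // Mw_col_le_center.
apply: le_trans (Mw_le_pow_center sigma k l) _.
rewrite mulrA ler_wpM2r ?Mw_ge0 //; rewrite -[leLHS]mulr1.
by apply: ler_pM; rewrite ?exprn_ge0 // ler_weXn2l ?S_ge1 // ltnW.
Qed.

Lemma opnorm1_Mw_le r sigma : (0 < size sigma)%N ->
  ((r <= size sigma)%N -> inner_word d (take r sigma)) ->
  opnorm1 (M sigma) <=
    N%:R ^+ 2 * S ^+ r * (S + 1) ^+ aa d m * (size sigma)%:R ^+ aa d m * etaw d p sigma.
Proof.
move=> sigma_gt0 window; have S_ge0 := ltW S_gt0.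
have S1_ge0 : 0 <= S + 1 by rewrite addr_ge0.
set n := size sigma in sigma_gt0 window *.
have K_le : (S * n%:R + 1) ^+ aa d m <= (S + 1) ^+ aa d m * n%:R ^+ aa d m.
  rewrite -exprMn; apply: lerXn2r; rewrite ?nnegrE ?addr_ge0 ?mulr_ge0 //.
  by rewrite mulrDl mul1r lerD2l ler1n.
apply: le_trans (opnorm1_le_sum_norm _) _.
apply: le_trans (_ : _ <= \sum_(k : 'I_N) \sum_(l : 'I_N)
    S ^+ r * ((S * n%:R + 1) ^+ aa d m * M sigma c0 c0)) _.
  apply: ler_sum => k _; apply: ler_sum => l _.
  by rewrite ger0_norm ?Mw_ge0 // Mw_entry_le.
rewrite !sumr_const card_ord -mulrnA -(mulr_natl _ (N * N)) natrM -!mulrA.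
do 3![apply: ler_wpM2l; first by rewrite ?exprn_ge0 ?ler0n].
rewrite mulrA; apply: ler_pM => //; first by rewrite exprn_ge0 ?addr_ge0 ?mulr_ge0.
  exact: Mw_ge0.
exact: Mw_center_le_eta.
Qed.

End Corollary.

Theorem corollary11 (R : realType) (d m : nat) (p : 'I_m.+1 -> R)
  (hd : (3 <= d)%N) (hm : (d <= m)%N)
  (hpos : forall i, 0 < p i)
  (hsum : \sum_i p i = 1)
  (h0m : p ord0 <= p ord_max)
  (hmi : forall i : 'I_m.+1, (0 < i)%N -> (i < m)%N -> p ord_max <= p i)
  (s t : R) (hs : 0 < s) (hst : s < t) (ht : t < m%:R / (d - 1)%:R) :
  exists C : R, 0 < C /\ exists D : R, 0 <= D /\
    forall sigma : seq 'I_m.+1,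
      s <= piw R d sigma <= t ->
      opnorm1 (Mw d p sigma) <= C * powR (size sigma)%:R D * etaw d p sigma.
Proof.
have d_gt1 : (1 < d)%N by lia.
rewrite natrB ?(ltnW d_gt1) // in ht; set xi := m%:R / _ in ht.
set a := aa d m; set S := \sum_i (p i)^-1.
have margin_gt0 : 0 < Num.min s (xi - t) by rewrite lt_min hs subr_gt0.
have [r deep] := exists_pow_ge d_gt1 (xi + a%:R) margin_gt0.
have dr_ge0 : 0 <= d%:R ^+ r :> R by rewrite exprn_ge0.
exists (a.*2.+1%:R ^+ 2 * S ^+ r * (S + 1) ^+ a).
split; first by rewrite !mulr_gt0 ?exprn_gt0 ?addr_gt0 ?S_gt0.
exists a%:R; split => // sigma sigma_in.
have size_gt0 : (0 < size sigma)%N.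
  case: sigma sigma_in => [|//]; rewrite /piw big_ord0 => /andP[s_le _].
  by move: hs; rewrite ltNge s_le.
rewrite powR_mulrn ?ler0n //.
apply: opnorm1_Mw_le => // r_le.
apply: (@prefix_in_window _ _ _ d_gt1 s t) => //.
  by apply: le_trans deep _; rewrite ler_wpM2l // ge_min lexx.
by apply: le_trans deep _; rewrite ler_wpM2l // ge_min lexx orbT.
Qed.
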